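(* Let $f_1,\dots,f_n\colon\mathbb{R}\to\mathbb{R}$ be differentiable and Lipschitz continuous, each having only finitely many zeros, with $f_i'(q)\neq 0$ at every zero $q$ of $f_i$. Let $\mathcal{Z}=\bigcap_{i\in[n]}\{z: f_i(z)<0\}$ and let $z^{\mathrm{obs}}\in\mathcal{Z}$. Fix $\varepsilon_{\max}>0$. For $\varepsilon_{\min}\in(0,\varepsilon_{\max}]$ and $S>0$, let $p_{\mathrm{grid}}=p_{\mathrm{grid}}(\varepsilon_{\min},S)$ be the output of the adaptive grid procedure described in the context, using the grid width $d(\cdot)$ defined there. Then there exist constants $C>0$, $\varepsilon_0>0$, $S_0>0$ (independent of $\varepsilon_{\min}$ and $S$) such that for all $\varepsilon_{\min}\in(0,\varepsilon_0)$ and all $S>S_0$, $$|p_{\mathrm{selective}}-p_{\mathrm{grid}}|\le C\bigl(\varepsilon_{\min}+\exp(-S^2/2)\bigr),$$ i.e. $|p_{\mathrm{selective}}-p_{\mathrm{grid}}|=O(\varepsilon_{\min}+\exp(-S^2/2))$ as $\varepsilon_{\min}\to0$, $S\to\infty$.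
   Context: Let $W\sim\mathcal{N}(0,1)$. The selective $p$-value is $p_{\mathrm{selective}}=\mathbb{P}(|W|>|z^{\mathrm{obs}}|\mid W\in\mathcal{Z})$. For each $z\in\mathbb{R}$ and $i\in[n]$, let $L_i(z)>0$ denote a Lipschitz constant of $f_i$ on $[z-\varepsilon_{\max},z+\varepsilon_{\max}]$, and define the grid width $d(z)=\min_{i:\,f_i(z)<0}|f_i(z)|/L_i(z)$ if $z\in\mathcal{Z}$, and $d(z)=\max_{i:\,f_i(z)\ge0}|f_i(z)|/L_i(z)$ if $z\notin\mathcal{Z}$. Adaptive grid procedure: set $z_0=-S$ and, while $z_j<S$, set $z_{j+1}=z_j+\min(\varepsilon_{\max},\max(d(z_j),\varepsilon_{\min}))$. Let $d^{\mathrm{obs}}=\min(\varepsilon_{\max},d(z^{\mathrm{obs}}))$, $J(z^{\mathrm{obs}})=[z^{\mathrm{obs}}-d^{\mathrm{obs}},z^{\mathrm{obs}}+d^{\mathrm{obs}}]$, $\mathcal{Z}^{\mathrm{grid}}=\bigcup_{j:\,z_j\in\mathcal{Z}}[z_j,z_{j+1}]\cup J(z^{\mathrm{obs}})$ (union over the generated grid points), and output $p_{\mathrm{grid}}=\mathbb{P}(|W|>|z^{\mathrm{obs}}|\mid W\in\mathcal{Z}^{\mathrm{grid}})$. *)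

From HB Require Import structures.
From mathcomp Require Import all_boot all_order all_algebra.
From mathcomp Require Import all_classical all_reals all_analysis.
Set Implicit Arguments. Unset Strict Implicit. Unset Printing Implicit Defensive.
Import Order.TTheory GRing.Theory Num.Def Num.Theory.
Local Open Scope classical_set_scope.
Local Open Scope ring_scope.

Section grid.
Variables (R : realType) (n : nat) (f L : 'I_n -> R -> R).

Definition Zset : set R := [set z | forall i : 'I_n, f i z < 0].

Definition ratio (i : 'I_n) (z : R) : R := `|f i z| / L i z.

(* For z in Z every index satisfies f_i z < 0, and the
   minimum over the (nonempty when n > 0) index set is taken with neutral
   element the maximum of all the (nonnegative) ratios, which is >= every
   term, so it does not affect the minimum.  For z not in Z the maximum over
   the (nonempty) set {i | f_i z >= 0} of nonnegative ratios uses neutral 0. *)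
Definition dwidth (z : R) : R :=
  if `[< Zset z >] then
    \big[Num.min/ \big[Num.max/0]_(i < n) ratio i z]_(i < n | f i z < 0) ratio i z
  else \big[Num.max/0]_(i < n | 0 <= f i z) ratio i z.

Variables (eps_max eps_min S zobs : R).

Definition gstep (z : R) : R := Num.min eps_max (Num.max (dwidth z) eps_min).

(* z_0 = -S, z_{j+1} = z_j + step(z_j); the procedure generates these points
   while z_j < S. *)
Fixpoint zgrid (j : nat) : R :=
  match j with
  | 0 => - S
  | j.+1 => zgrid j + gstep (zgrid j)
  end.

Definition dobs : R := Num.min eps_max (dwidth zobs).

Definition Zgrid : set R :=
  (\bigcup_(j in [set: nat])
     [set x | zgrid j < S /\ Zset (zgrid j) /\ zgrid j <= x <= zgrid j.+1])
  `|` [set x | zobs - dobs <= x <= zobs + dobs].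

End grid.

Definition cond_prob_std_normal {R : realType} (A B : set R) : R :=
  fine (normal_prob 0 1 (A `&` B)) / fine (normal_prob 0 1 B).

Definition p_selective {R : realType} n (f : 'I_n -> R -> R) (zobs : R) : R :=
  cond_prob_std_normal [set w | `|zobs| < `|w|] (Zset f).

Definition p_grid {R : realType} n (f L : 'I_n -> R -> R)
  (eps_max eps_min S zobs : R) : R :=
  cond_prob_std_normal [set w | `|zobs| < `|w|] (Zgrid f L eps_max eps_min S zobs).

(* Away from the finitely many zeros of the f_i and inside (-S, S), a point
   lies in Z exactly when it lies in Z^grid.  Within eps_min of the grid point
   z_j below it, no f_i changes sign (intermediate value theorem); a step longer
   than eps_min is at most the grid width d(z_j), and over such a distance the
   local Lipschitz constant L_i(z_j) cannot let f_i use up the margin |f_i(z_j)|,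
   so the sign pattern of z_j persists.  Hence the two conditioning events
   differ on a set of standard Gaussian mass at most
   2 exp(-S^2/2) + 2 eps_min #zeros, while P(Z) > 0 because Z contains an
   interval around z_obs; perturbing numerator and denominator of the
   conditional probability by that mass gives the bound. *)

From Pilot Require Import Defs.
From HB Require Import structures.
From mathcomp Require Import all_boot all_order all_algebra.
From mathcomp Require Import all_classical all_reals all_analysis.
From mathcomp Require Import ring lra measurable_realfun.
Set Implicit Arguments. Unset Strict Implicit. Unset Printing Implicit Defensive.
Import Order.TTheory GRing.Theory Num.Def Num.Theory.
Import numFieldTopology.Exports numFieldNormedType.Exports.
Local Open Scope classical_set_scope.
Local Open Scope ring_scope.

Section standard_normal.
Variable R : realType.
Local Notation P := (@normal_prob R 0 1).

Definition gauss_antider (x : R) : R := - expR (- x ^+ 2 / 2).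

Definition xgauss (x : R) : R := x * expR (- x ^+ 2 / 2).

Lemma is_derive_gauss_antider (x : R) : is_derive x 1 gauss_antider (xgauss x).
Proof.
rewrite /gauss_antider /xgauss; apply: is_derive_eq.
rewrite !scaler0 add0r.
change (2^-1 *: - (x%:A + x%:A)) with (2^-1 * - (x * 1 + x * 1) : R).
by field.
Qed.

Lemma continuous_gauss_antider : continuous gauss_antider.
Proof.
move=> x; apply/differentiable_continuous/derivable1_diffP.
by case: (is_derive_gauss_antider x).
Qed.

Lemma continuous_xgauss : continuous xgauss.
Proof.
move=> x; apply/differentiable_continuous/derivable1_diffP.
exact: ex_derive.
Qed.

Lemma gauss_antider_cvgy : gauss_antider x @[x --> +oo] --> (0 : R).
Proof.
rewrite /gauss_antider -oppr0; apply: cvgN.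
have -> : (fun x : R => expR (- x ^+ 2 / 2)) =
    (fun z => expR (- z)) \o (fun x : R => x ^+ 2 / 2).
  by apply: funext => x /=; rewrite mulNr.
apply: (@cvg_comp _ _ _ _ _ _ (pinfty_nbhs R)); last exact: cvgr_expR.
apply/cvgryPge => A; near=> x.
have : Num.max 1 (2 * A) <= x by near: x; apply: nbhs_pinfty_ge; rewrite num_real.
rewrite ge_max => /andP[x1 x2A]; nra.
Unshelve. all: by end_near.
Qed.

Lemma integral_xgauss_itvcy (S : R) : 0 <= S ->
  (\int[lebesgue_measure]_(x in `[S, +oo[) (xgauss x)%:E =
    (expR (- S ^+ 2 / 2))%:E)%E.
Proof.
move=> S0; rewrite (@ge0_continuous_FTC2y _ xgauss gauss_antider S 0).
- by rewrite /gauss_antider sub0e EFinN oppeK.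
- by move=> x Sx; rewrite /xgauss mulr_ge0 ?expR_ge0 // (le_trans S0).
- exact/continuous_subspaceT/continuous_xgauss.
- exact: gauss_antider_cvgy.
- by move=> x _; case: (is_derive_gauss_antider x).
- exact/cvg_at_right_filter/continuous_gauss_antider.
- by move=> x _; rewrite derive1E; have [_ ->] := is_derive_gauss_antider x.
Qed.

Lemma normal_pdf01E (x : R) :
  normal_pdf 0 1 x = normal_peak 1 * expR (- x ^+ 2 / 2).
Proof. by rewrite normal_pdfE ?oner_neq0 // /normal_fun subr0 expr1n. Qed.

Lemma normal_peak1_le1 : normal_peak (1 : R) <= 1.
Proof.
have pi2 : (2 : R) <= pi := pi_ge2 R.
have t1 : 1 <= 1 ^+ 2 * pi *+ 2 :> R by rewrite expr1n mul1r mulr2n; lra.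
rewrite /normal_peak invf_le1 ?sqrtr_gt0; last lra.
by rewrite -[X in X <= _]sqrtr1 ler_sqrt //; lra.
Qed.

Lemma normal_pdf01_le_expR (x : R) : normal_pdf 0 1 x <= expR (- x ^+ 2 / 2).
Proof. by rewrite normal_pdf01E ler_piMl ?expR_ge0 ?normal_peak1_le1. Qed.

Lemma normal_pdf01_le1 (x : R) : normal_pdf 0 1 x <= 1.
Proof.
apply: le_trans (normal_pdf01_le_expR x) _.
by rewrite expR_le1 mulNr oppr_le0 divr_ge0 ?sqr_ge0.
Qed.

(* For x >= S >= 1 the density is dominated by x e^(-x^2/2), which integrates
   in closed form. *)
Lemma normal_prob_itvcy_le (S : R) : 1 <= S ->
  (P `[S, +oo[%classic <= (expR (- S ^+ 2 / 2))%:E)%E.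
Proof.
move=> S1; rewrite -integral_xgauss_itvcy; last lra.
apply: ge0_le_integral => //.
- by move=> x _; rewrite lee_fin normal_pdf_ge0.
- apply/measurable_EFinP/measurable_funTS; exact: measurable_normal_pdf.
- apply/measurable_EFinP/measurable_funTS.
  exact: continuous_measurable_fun continuous_xgauss.
- move=> x; rewrite /= in_itv /= andbT => Sx.
  rewrite lee_fin (le_trans (normal_pdf01_le_expR x)) // ler_peMl ?expR_ge0 //.
  lra.
Qed.

Lemma normal_prob_itvNyc_le (S : R) : 1 <= S ->
  (P `]-oo, (- S)%R]%classic <= (expR (- S ^+ 2 / 2))%:E)%E.
Proof.
move=> S1; rewrite /normal_prob ge0_integration_by_substitutionNy.
- under eq_integral => x _ do rewrite /= normal_pdf01E sqrrN -normal_pdf01E.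
  exact: normal_prob_itvcy_le.
- exact/continuous_subspaceT/continuous_normal_pdf/oner_neq0.
- by move=> x _; exact: normal_pdf_ge0.
Qed.

Lemma normal_prob_itvcc_le (a b : R) : a <= b ->
  (P `[a, b]%classic <= (b - a)%:E)%E.
Proof.
move=> ab; rewrite /normal_prob.
apply: (@le_trans _ _ (\int[lebesgue_measure]_(x in `[a, b]) (cst 1%E) x))%E.
  apply: ge0_le_integral => //.
  - by move=> x _; rewrite lee_fin normal_pdf_ge0.
  - apply/measurable_EFinP/measurable_funTS; exact: measurable_normal_pdf.
  - by move=> x _; rewrite lee_fin normal_pdf01_le1.
rewrite integral_cst // mul1e.
have := @lebesgue_measure_itv R `[a, b]; rewrite /= => ->.
by rewrite lte_fin; case: ifP => _; rewrite ?EFinD // lee_fin subr_ge0.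
Qed.

Lemma normal_prob_itvoo_gt0 (c r : R) : 0 < r ->
  (0 < P `](c - r)%R, (c + r)%R[%classic)%E.
Proof.
move=> r0; rewrite /normal_prob.
(* the density on the interval is at least its value at [|c| + r] *)
set m := normal_peak (1 : R) * expR (- (`|c| + r) ^+ 2 / 2).
have m0 : 0 < m by rewrite mulr_gt0 ?expR_gt0 ?normal_peak_gt0 ?oner_neq0.
apply: (@lt_le_trans _ _
  (\int[lebesgue_measure]_(x in `](c - r)%R, (c + r)%R[) (cst m%:E) x))%E.
  rewrite integral_cst //.
  have := @lebesgue_measure_itv R `](c - r)%R, (c + r)%R[; rewrite /= => ->.
  rewrite lte_fin ifT; last lra.
  by rewrite -EFinD -EFinM lte_fin mulr_gt0 //; lra.
apply: ge0_le_integral => //.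
- by move=> x _; rewrite lee_fin ltW.
- apply/measurable_EFinP/measurable_funTS; exact: measurable_normal_pdf.
- move=> x; rewrite /= in_itv /= => /andP[x1 x2].
  rewrite lee_fin normal_pdf01E /m ler_wpM2l ?normal_peak_ge0 // ler_expR.
  have /andP[c1 c2] : - `|c| <= c <= `|c| by rewrite -ler_norml.
  rewrite !mulNr lerN2 ler_pM2r ?invr_gt0 //; nra.
Qed.

End standard_normal.


Section fine_probability.
Variables (d : measure_display) (T : measurableType d) (R : realType).
Variable P : probability T R.

Lemma fine_le_measure (X Y : set T) : measurable X -> measurable Y ->
  X `<=` Y -> fine (P X) <= fine (P Y).
Proof.
by move=> mX mY XY; apply: fine_le; rewrite ?fin_num_measure ?le_measure ?inE.
Qed.

Lemma fine_measure_le_setU (X Y E : set T) :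
  measurable X -> measurable Y -> measurable E ->
  X `<=` Y `|` E -> fine (P X) <= fine (P Y) + fine (P E).
Proof.
move=> mX mY mE XYE.
have [fY fE] := (fin_num_measure P _ mY, fin_num_measure P _ mE).
rewrite -fineD //; apply: fine_le; rewrite ?fin_num_measure ?fin_numD ?fY //.
apply: le_trans (measureU2 P mY mE).
by apply: le_measure; rewrite ?inE //; exact: measurableU.
Qed.

Lemma fine_measure_dist_le (X Y E : set T) :
  measurable X -> measurable Y -> measurable E ->
  (forall x, ~ E x -> (X x <-> Y x)) -> `|fine (P X) - fine (P Y)| <= fine (P E).
Proof.
move=> mX mY mE XY.
have cover (U V : set T) : (forall x, ~ E x -> U x -> V x) -> U `<=` V `|` E.
  by move=> UV x Ux; case: (pselect (E x)) => Ex; [right | left; exact: UV].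
have le1 := fine_measure_le_setU mX mY mE (cover _ _ (fun x Ex => (XY x Ex).1)).
have le2 := fine_measure_le_setU mY mX mE (cover _ _ (fun x Ex => (XY x Ex).2)).
by rewrite ler_norml; apply/andP; split; lra.
Qed.

End fine_probability.

Lemma ler_dist_div (R : realFieldType) (a b a' b' m : R) :
  0 <= a <= b -> 0 <= a' <= b' -> 0 < b ->
  `|a - a'| <= m -> `|b - b'| <= m -> `|a / b - a' / b'| <= 2 * m / b.
Proof.
move=> /andP[a0 ab] /andP[a'0 a'b'] b0 /ler_normlP[h1 h2] /ler_normlP[h3 h4].
have [b'0|b'0] := leP b' 0.
  have [-> ->] : a' = 0 /\ b' = 0 by split; apply/eqP; rewrite eq_le; lra.
  rewrite invr0 mulr0 subr0 ger0_norm ?divr_ge0 ?(ltW b0) //.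
  by rewrite ler_pM2r ?invr_gt0 //; lra.
have -> : a / b - a' / b' = (a * b' - a' * b) / (b * b').
  by field; rewrite !gt_eqF.
rewrite normrM (@ger0_norm _ _^-1) ?invr_ge0 ?mulr_ge0 ?(ltW b0) ?(ltW b'0) //.
rewrite ler_pdivrMr ?mulr_gt0 //.
have -> : 2 * m / b * (b * b') = 2 * m * b' by field; rewrite gt_eqF.
rewrite ler_norml; apply/andP; split; nra.
Qed.

Lemma measurable_norm_gt (R : realType) (r : R) : measurable [set w : R | r < `|w|].
Proof.
have -> : [set w : R | r < `|w|] = `]-oo, (- r)%R[ `|` `]r, +oo[.
  apply/seteqP; split => x; rewrite /= !in_itv /= andbT ltr_normr.
    by move=> /orP[h|h]; [right | left; lra].
  by case => h; apply/orP; [right; lra | left].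
by apply: measurableU; exact: measurable_itv.
Qed.

Section standard_normal_conditional.
Variable R : realType.
Local Notation P := (@normal_prob R 0 1).

Lemma cond_prob_std_normal_dist (A B B' E : set R) :
  measurable A -> measurable B -> measurable B' -> measurable E ->
  (forall x, ~ E x -> (B x <-> B' x)) -> 0 < fine (P B) ->
  `|cond_prob_std_normal A B - cond_prob_std_normal A B'|
     <= 2 * fine (P E) / fine (P B).
Proof.
move=> mA mB mB' mE BB' PB0.
have mAB := measurableI _ _ mA mB; have mAB' := measurableI _ _ mA mB'.
apply: ler_dist_div => //.
- by rewrite fine_ge0 ?measure_ge0 ?fine_le_measure //; exact: subIsetr.
- by rewrite fine_ge0 ?measure_ge0 ?fine_le_measure //; exact: subIsetr.
- apply: fine_measure_dist_le => // x Ex.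
  by split=> -[Ax Bx]; split => //; apply/(BB' x Ex).
- exact: fine_measure_dist_le.
Qed.

Definition thickening (s : seq R) (e : R) : set R :=
  \big[setU/set0]_(q <- s) `[(q - e)%R, (q + e)%R]%classic.

Lemma thickeningP s e x : thickening s e x <-> exists2 q, q \in s & `|x - q| <= e.
Proof.
elim: s => [|q s IH]; first by rewrite /thickening big_nil; split => // -[].
rewrite /thickening big_cons -/(thickening s e); split.
- case=> [|/IH[q' q's xq']].
    by rewrite /= in_itv /= -ler_distl => xq; exists q; rewrite ?mem_head.
  by exists q' => //; rewrite in_cons q's orbT.
- case=> q'; rewrite in_cons => /orP[/eqP -> | q's] xq'.
    by left; rewrite /= in_itv /= -ler_distl.
  by right; apply/IH; exists q'.
Qed.

Lemma measurable_thickening s e : measurable (thickening s e).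
Proof.
elim: s => [|q s IH]; first by rewrite /thickening big_nil.
by rewrite /thickening big_cons; exact: measurableU.
Qed.

Lemma normal_prob_thickening_le s e : 0 <= e ->
  fine (P (thickening s e)) <= (size s)%:R * (2 * e).
Proof.
move=> e0; elim: s => [|q s IH].
  by rewrite /thickening big_nil measure0 mul0r.
have mI : measurable `[(q - e)%R, (q + e)%R]%classic by exact: measurable_itv.
have Iq : fine (P `[(q - e)%R, (q + e)%R]%classic) <= 2 * e.
  rewrite -lee_fin fineK ?fin_num_measure //.
  by rewrite (_ : 2 * e = q + e - (q - e)); [apply: normal_prob_itvcc_le | ]; lra.
have mT := measurable_thickening s e.
rewrite /thickening big_cons -/(thickening s e) /= -natr1 mulrDl mul1r.
have := @fine_measure_le_setU _ _ _ P _ _ _ (measurableU _ _ mI mT) mI mT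
  (fun x h => h).
lra.
Qed.

Lemma normal_prob_tails_le (S : R) : 1 <= S ->
  fine (P (`]-oo, (- S)%R] `|` `[S, +oo[)) <= 2 * expR (- S ^+ 2 / 2).
Proof.
move=> S1; have ml := @measurable_itv R `]-oo, (- S)%R].
have mr := @measurable_itv R `[S, +oo[.
have := @fine_measure_le_setU _ _ _ P _ _ _ (measurableU _ _ ml mr) ml mr
  (fun x h => h).
have : fine (P `]-oo, (- S)%R]) <= expR (- S ^+ 2 / 2).
  by rewrite -lee_fin fineK ?fin_num_measure // normal_prob_itvNyc_le.
have : fine (P `[S, +oo[) <= expR (- S ^+ 2 / 2).
  by rewrite -lee_fin fineK ?fin_num_measure // normal_prob_itvcy_le.
lra.
Qed.

End standard_normal_conditional.

Lemma sign_change_root (R : realType) (g : R -> R) (a b : R) :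
  continuous g -> a <= b -> (g a < 0) != (g b < 0) ->
  exists2 c, a <= c <= b & g c = 0.
Proof.
move=> gc ab gab.
have [|c] := @IVT R g a b 0 ab (continuous_subspaceT gc).
  rewrite ge_min le_max; move: gab.
  by case: (ltP (g a) 0) => ga; case: (ltP (g b) 0) => gb //= _;
    rewrite ?(ltW ga) ?(ltW gb) ?ga ?gb ?orbT.
by rewrite in_itv /= => abc gc0; exists c.
Qed.

Lemma finite_zeros_seq (R : realType) n (f : 'I_n -> R -> R) :
  (forall i, finite_set [set q | f i q = 0]) ->
  exists s : seq R, [set q | exists i, f i q = 0] = [set` s].
Proof.
move=> f_fin; apply/finite_seqP.
have -> : [set q | exists i, f i q = 0] =
    \bigcup_(i in [set: 'I_n]) [set q | f i q = 0].
  by apply/seteqP; split => x /= [i]; [exists i | move=> _ h; exists i].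
by apply: bigcup_finite => //; exact: finite_finset.
Qed.

Lemma measurable_Zset (R : realType) n (f : 'I_n -> R -> R) :
  (forall i, continuous (f i)) -> measurable (Zset f).
Proof.
move=> fc; have -> : Zset f = \bigcap_(i in [set: 'I_n]) (f i @^-1` `]-oo, 0[).
  apply/seteqP; split=> x /= Zx i; first by rewrite /= in_itv /= Zx.
  by have := Zx i I; rewrite /= in_itv.
apply: fin_bigcap_measurable; first exact: finite_finset.
move=> i _; rewrite -[X in measurable X]setTI.
exact: (continuous_measurable_fun (fc i)) measurableT _ (measurable_itv _).
Qed.

Section grid_width.
Variables (R : realType) (n : nat) (f L : 'I_n -> R -> R) (eps_max : R).
Hypothesis L_gt0 : forall i z, 0 < L i z.
Hypothesis f_lip : forall i z x y, z - eps_max <= x <= z + eps_max ->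
  z - eps_max <= y <= z + eps_max -> `|f i x - f i y| <= L i z * `|x - y|.
Local Notation d := (dwidth f L).
Local Notation ratio := (Defs.ratio f L).

Lemma L_mul_ratio i z : L i z * ratio i z = `|f i z|.
Proof. by rewrite /ratio mulrC divfK // gt_eqF. Qed.

Lemma ratio_ge0 i z : 0 <= ratio i z.
Proof. by rewrite divr_ge0 // ltW. Qed.

Lemma lip_window i z x : `|x - z| <= eps_max ->
  `|f i x - f i z| <= L i z * `|x - z|.
Proof.
move=> xz; have e0 : 0 <= eps_max := le_trans (normr_ge0 _) xz.
by move: xz; rewrite ler_distl => xz; apply: f_lip => //; apply/andP; split; lra.
Qed.

Lemma dwidth_le_ratio z i : Zset f z -> d z <= ratio i z.
Proof. by move=> Zz; rewrite /dwidth asboolT //; exact: bigmin_le_cond. Qed.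

Lemma dwidth_notZset z : ~ Zset f z -> exists2 i, 0 <= f i z & d z = ratio i z.
Proof.
move=> Zz; have [j fj] : exists j, 0 <= f j z.
  apply: contrapT => nj; apply: Zz => i.
  by rewrite ltNge; apply/negP => fi; apply: nj; exists i.
rewrite /dwidth asboolF //.
have [i fi ->] := @eq_bigmax _ _ _ 0 j (fun i => 0 <= f i z) (ratio^~ z) fj
  (fun i _ => ratio_ge0 i z).
by exists i.
Qed.

Lemma dwidth_gt0 z : (0 < n)%N -> Zset f z -> 0 < d z.
Proof.
move=> n0 Zz; have ratio_gt0 i : 0 < ratio i z.
  by rewrite divr_gt0 // normr_gt0 ltr0_neq0.
rewrite /dwidth asboolT //; apply/bigmin_gtP; split=> [|i _]; last exact: ratio_gt0.
exact: lt_le_trans (ratio_gt0 (Ordinal n0)) (le_bigmax _ _ _).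
Qed.

(* Within the window, the Lipschitz bound cannot use up the margin [|f_i z|]
   that defines the grid width. *)
Lemma Zset_window_le0 z x i : Zset f z -> `|x - z| <= eps_max ->
  `|x - z| <= d z -> f i x <= 0.
Proof.
move=> Zz xze xzd; have /ler_normlP[_] := lip_window i xze.
have : L i z * `|x - z| <= L i z * ratio i z.
  by rewrite ler_pM2l // (le_trans xzd) ?dwidth_le_ratio.
rewrite L_mul_ratio (ltr0_norm (Zz i)) => *; lra.
Qed.

Lemma Zset_window_lt0 z x i : Zset f z -> `|x - z| <= eps_max ->
  `|x - z| < d z -> f i x < 0.
Proof.
move=> Zz xze xzd; have /ler_normlP[_] := lip_window i xze.
have : L i z * `|x - z| < L i z * ratio i z.
  by rewrite ltr_pM2l // (lt_le_trans xzd) ?dwidth_le_ratio.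
rewrite L_mul_ratio (ltr0_norm (Zz i)) => *; lra.
Qed.

Lemma notZset_window z x : ~ Zset f z -> 0 <= x - z <= eps_max ->
  x - z <= d z -> ~ Zset f x.
Proof.
move=> Zz /andP[xz0 xze] xzd Zx; have [i fi dE] := dwidth_notZset Zz.
rewrite -(ger0_norm xz0) in xze xzd.
have /ler_normlP[fxz _] := lip_window i xze.
have : L i z * `|x - z| <= L i z * ratio i z by rewrite ler_pM2l // -dE.
rewrite L_mul_ratio (ger0_norm fi) => *; have := Zx i; lra.
Qed.

Lemma Zset_nbhs z : (0 < n)%N -> 0 < eps_max -> Zset f z ->
  exists2 r, 0 < r & forall x, `|x - z| < r -> Zset f x.
Proof.
move=> n0 e0 Zz; exists (Num.min eps_max (d z)); first by rewrite lt_min e0 dwidth_gt0.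
move=> x; rewrite lt_min => /andP[xze xzd] i.
exact: Zset_window_lt0 (ltW xze) xzd.
Qed.

Lemma normal_prob_Zset_gt0 z : (0 < n)%N -> 0 < eps_max ->
  (forall i, continuous (f i)) -> Zset f z -> 0 < fine (normal_prob 0 1 (Zset f)).
Proof.
move=> n0 e0 fc Zz; have [r r0 rZ] := Zset_nbhs n0 e0 Zz.
have mI : measurable `](z - r)%R, (z + r)%R[%classic by exact: measurable_itv.
have IZ : `](z - r)%R, (z + r)%R[ `<=` Zset f.
  by move=> x; rewrite /= in_itv /= -ltr_distl => /rZ.
apply: lt_le_trans
  (@fine_le_measure _ _ _ (@normal_prob R 0 1) _ _ mI (measurable_Zset fc) IZ).
by rewrite -lte_fin fineK ?fin_num_measure // normal_prob_itvoo_gt0.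
Qed.

Section grid.
Variables (eps_min S zobs : R).
Hypotheses (eps_min_gt0 : 0 < eps_min) (eps_min_le : eps_min <= eps_max).
Hypothesis f_cont : forall i, continuous (f i).
Hypothesis Zobs : Zset f zobs.
Local Notation step := (gstep f L eps_max eps_min).
Local Notation zg := (zgrid f L eps_max eps_min S).
Local Notation G := (Zgrid f L eps_max eps_min S zobs).

Definition near_zero (x : R) := exists i q, f i q = 0 /\ `|x - q| <= eps_min.

Lemma sign_eq_off_zeros i x z : ~ near_zero x -> `|x - z| <= eps_min ->
  (f i x < 0) = (f i z < 0).
Proof.
move=> nx; rewrite ler_distl => /andP[xz1 xz2].
apply/eqP; rewrite -[_ == _]negbK; apply/negP => sgn; apply: nx.
have [c /andP[c1 c2] fc0] : exists2 c, Num.min x z <= c <= Num.max x z & f i c = 0.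
  have [xz|zx] := leP x z; first exact: sign_change_root (@f_cont i) xz sgn.
  by apply: sign_change_root (@f_cont i) (ltW zx) _; rewrite eq_sym.
exists i, c; split => //; rewrite ler_distl; move: c1 c2.
by have [xz|zx] := leP x z => c1 c2; apply/andP; split; lra.
Qed.

Lemma gstep_ge z : eps_min <= step z.
Proof. by rewrite /gstep le_min eps_min_le le_max lexx orbT. Qed.

Lemma gstep_le z : step z <= eps_max.
Proof. by rewrite /gstep ge_min lexx. Qed.

Lemma gstep_le_dwidth z : eps_min < step z -> step z <= d z.
Proof.
rewrite /gstep lt_min => /andP[_]; rewrite lt_max ltxx orbF => dz.
by rewrite ge_min ge_max lexx (ltW dz) orbT.
Qed.

Lemma zgrid_ge j : - S + j%:R * eps_min <= zg j.
Proof.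
elim: j => [|j IH]; first by rewrite mul0r addr0.
by rewrite /= -natr1 mulrDl mul1r addrA lerD // gstep_ge.
Qed.

Lemma zgrid_bracket x : - S <= x -> exists j, zg j <= x < zg j.+1.
Proof.
move=> Sx; suff [m xm] : exists m, x < zg m.
  elim: m xm => [|m IH] xm; first by rewrite ltNge Sx in xm.
  by have [mx|xm'] := leP (zg m) x; [exists m; rewrite mx | exact: IH].
have h0 : 0 <= (x + S) / eps_min by rewrite divr_ge0 ?(ltW eps_min_gt0) //; lra.
exists (truncn ((x + S) / eps_min)).+1.
have := zgrid_ge (truncn ((x + S) / eps_min)).+1.
have : (x + S) / eps_min < (truncn ((x + S) / eps_min)).+1%:R.
  by rewrite -truncn_lt_nat.
rewrite ltr_pdivrMr // => *; lra.
Qed.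

Lemma Zset_of_window z x : ~ near_zero x -> Zset f z ->
  `|x - z| <= eps_max -> `|x - z| <= d z -> Zset f x.
Proof.
move=> nx Zz xze xzd i; rewrite lt_neqAle (Zset_window_le0 _ Zz xze xzd) andbT.
apply/eqP => fx0; apply: nx; exists i, x; split => //.
by rewrite subrr normr0 ltW.
Qed.

(* Off the zeros, a point of a grid cell lies in [Z] iff its left end does:
   either it is within [eps_min] of it, or the step was the grid width. *)
Lemma Zset_cell j x : ~ near_zero x -> zg j <= x <= zg j.+1 ->
  (Zset f x <-> Zset f (zg j)).
Proof.
move=> nx /andP[j1 j2]; have xj0 : 0 <= x - zg j by rewrite subr_ge0.
have [xj|xj] := leP (x - zg j) eps_min.
  have xj' : `|x - zg j| <= eps_min by rewrite ger0_norm.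
  by split=> Z i; rewrite ?(sign_eq_off_zeros i nx xj')
    // -(sign_eq_off_zeros i nx xj').
have sj : eps_min < step (zg j) by move: j2 => /=; lra.
have [sd se] := (gstep_le_dwidth sj, gstep_le (zg j)).
move: j2 => /= j2; split=> Z.
  by apply: contrapT => Zj; apply: (notZset_window Zj _ _ Z); rewrite ?xj0 /=; lra.
by apply: (Zset_of_window nx Z); rewrite ger0_norm; lra.
Qed.

Lemma Zset_sub_Zgrid x : ~ near_zero x -> - S < x < S -> Zset f x -> G x.
Proof.
move=> nx /andP[Sx xS] Zx; have [j /andP[j1 j2]] := zgrid_bracket (ltW Sx).
left; exists j => //; split; first exact: le_lt_trans j1 xS.
have xj : zg j <= x <= zg j.+1 by rewrite j1 ltW.
by split=> //; apply/(Zset_cell nx xj).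
Qed.

Lemma Zgrid_sub_Zset x : ~ near_zero x -> G x -> Zset f x.
Proof.
move=> nx [[j _ [_ [Zj xj]]] | /andP[J1 J2]]; first exact/(Zset_cell nx xj).
have [od1 od2] : dobs f L eps_max zobs <= eps_max /\ dobs f L eps_max zobs <= d zobs.
  by rewrite /dobs !ge_min !lexx orbT.
by apply: (Zset_of_window nx Zobs); rewrite ler_distl; apply/andP; split; lra.
Qed.

Lemma measurable_Zgrid : measurable G.
Proof.
apply: measurableU; last exact: (measurable_itv `[_, _]).
apply: bigcupT_measurable => j.
have [[jS Zj]|nj] := pselect (zg j < S /\ Zset f (zg j)).
  have -> : [set x | zg j < S /\ Zset f (zg j) /\ zg j <= x <= zg j.+1] =
      `[zg j, zg j.+1]%classic.
    by apply/seteqP; split => x; rewrite /= in_itv /=; [case=> _ [] | split].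
  exact: measurable_itv.
have -> : [set x | zg j < S /\ Zset f (zg j) /\ zg j <= x <= zg j.+1] = set0.
  by apply/seteqP; split => x // -[jS [Zj _]]; apply: nj.
exact: measurable0.
Qed.

(* [Z] and [Z^grid] can only differ outside [(-S, S)] or within [eps_min] of a zero. *)
Lemma p_grid_dist (s : seq R) : [set q | exists i, f i q = 0] = [set` s] ->
  1 <= S -> 0 < fine (normal_prob 0 1 (Zset f)) ->
  `|p_selective f zobs - p_grid f L eps_max eps_min S zobs|
    <= 2 * (2 * expR (- S ^+ 2 / 2) + (size s)%:R * (2 * eps_min))
       / fine (normal_prob 0 1 (Zset f)).
Proof.
move=> zerosE S1 PZ0.
pose T : set R := `]-oo, (- S)%R] `|` `[S, +oo[.
have mT : measurable T by apply: measurableU; exact: measurable_itv.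
have mN := measurable_thickening s eps_min.
have mE := measurableU _ _ mT mN.
have ZG x : ~ (T `|` thickening s eps_min) x -> (Zset f x <-> G x).
  move=> Ex; have nx : ~ near_zero x.
    move=> [i [q [fq xq]]]; apply: Ex; right; apply/thickeningP; exists q => //.
    by have : [set` s] q by rewrite -zerosE; exists i.
  split; last exact: Zgrid_sub_Zset.
  have [Sx xS] : - S < x /\ x < S.
    by split; rewrite ltNge; apply/negP => h; apply: Ex; left; [left | right];
      rewrite /= in_itv /= ?h.
  by apply: Zset_sub_Zgrid => //; rewrite Sx xS.
apply: le_trans (cond_prob_std_normal_dist (measurable_norm_gt _)
  (measurable_Zset f_cont) measurable_Zgrid mE ZG PZ0) _.
rewrite ler_pM2r ?invr_gt0 // ler_pM2l //.
have := @fine_measure_le_setU _ _ _ (@normal_prob R 0 1) _ _ _ mE mT mN (fun x h => h).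
have := normal_prob_thickening_le s (ltW eps_min_gt0).
have := normal_prob_tails_le S1.
lra.
Qed.

End grid.

End grid_width.

Theorem theorem2 (R : realType) (n : nat) (f L : 'I_n -> R -> R)
    (zobs eps_max : R) :
  (0 < n)%N ->
  (forall i x, derivable (f i) x 1) ->
  (forall i, exists k : R, forall x y, `|f i x - f i y| <= k * `|x - y|) ->
  (forall i, finite_set [set q | f i q = 0]) ->
  (forall i q, f i q = 0 -> derive1 (f i) q != 0) ->
  Zset f zobs ->
  0 < eps_max ->
  (forall i z, 0 < L i z) ->
  (forall i z x y, z - eps_max <= x <= z + eps_max ->
     z - eps_max <= y <= z + eps_max ->
     `|f i x - f i y| <= L i z * `|x - y|) ->
  exists C eps0 S0 : R, [/\ 0 < C, 0 < eps0, 0 < S0 &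
    forall eps_min S : R, 0 < eps_min -> eps_min <= eps_max ->
      eps_min < eps0 -> S0 < S ->
      `|p_selective f zobs - p_grid f L eps_max eps_min S zobs|
        <= C * (eps_min + expR (- S ^+ 2 / 2))].
Proof.
move=> n0 f_der _ f_fin _ Zobs e0 L_gt0 f_lip.
have f_cont i : continuous (f i).
  by move=> x; apply/differentiable_continuous/derivable1_diffP.
have [s zerosE] := finite_zeros_seq f_fin.
have PZ0 := normal_prob_Zset_gt0 L_gt0 f_lip n0 e0 f_cont Zobs.
pose K : R := 2 + (size s)%:R * 2.
exists (2 * K / fine (normal_prob 0 1 (Zset f))), 1, 1; split => //.
  by rewrite divr_gt0 ?mulr_gt0 // ltr_wpDr.
move=> eps_min S emin0 emin_le _ S1.
apply: le_trans
  (p_grid_dist L_gt0 f_lip emin0 emin_le f_cont Zobs zerosE (ltW S1) PZ0) _.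
rewrite [leRHS]mulrAC ler_pM2r ?invr_gt0 // -mulrA ler_pM2l // /K.
have := expR_ge0 (- S ^+ 2 / 2); have : 0 <= (size s)%:R :> R by [].
nra.
Qed.
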